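(* Let $(S,+)$ be an infinite left weakly cancellative semigroup with no idempotent element, and let $\langle x_n\rangle_{n=1}^\infty$ be a sequence in $S$. Then there exists a sum subsystem $\langle y_n\rangle_{n=1}^\infty$ of $\langle x_n\rangle_{n=1}^\infty$ which satisfies finiteness of finite sums.
   Context: $S$ is left weakly cancellative if for all $a,b\in S$ the set $\{x\in S: a+x=b\}$ is finite; $e$ is idempotent if $e+e=e$. $\mathcal{P}_f(\mathbb{N})$ denotes the set of nonempty finite subsets of $\mathbb{N}=\{1,2,\dots\}$, and $\sum_{n\in H}x_n$ is the sum in increasing order of indices. A sequence $\langle y_n\rangle_{n=1}^\infty$ is a sum subsystem of $\langle x_n\rangle_{n=1}^\infty$ if there is a sequence $\langle H_n\rangle_{n=1}^\infty$ in $\mathcal{P}_f(\mathbb{N})$ with $\max H_n<\min H_{n+1}$ and $y_n=\sum_{t\in H_n}x_t$ for all $n$. A sequence $\langle y_n\rangle_{n=1}^\infty$ satisfies finiteness of finite sums if for all $H_1,H_2\in\mathcal{P}_f(\mathbb{N})$ with $\max H_1\neq\max H_2$ one has $\sum_{n\in H_1}y_n\neq\sum_{n\in H_2}y_n$. *)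

(* Semigroups are given as a carrier type with an associative
   binary operation [op] (written + in the paper, not assumed commutative). *)
From Stdlib Require Import List Arith Sorting.Sorted.
Import ListNotations.

Definition finite_pred {T : Type} (P : T -> Prop) : Prop :=
  exists l : list T, forall s, P s -> In s l.

Definition infinite_type (T : Type) : Prop :=
  ~ finite_pred (fun _ : T => True).

Definition associative {T : Type} (op : T -> T -> T) : Prop :=
  forall a b c, op a (op b c) = op (op a b) c.

Definition left_weakly_cancellative {T : Type} (op : T -> T -> T) : Prop :=
  forall a b : T, finite_pred (fun x => op a x = b).

Definition idempotent {T : Type} (op : T -> T -> T) (e : T) : Prop :=
  op e e = e.

(* Nonempty finite subsets of the index set are represented by their
   strictly increasing (nonempty) list of elements. *)
Definition Pf (H : list nat) : Prop := H <> [] /\ Sorted lt H.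

Definition minP (H : list nat) : nat := hd 0 H.
Definition maxP (H : list nat) : nat := last H 0.

(* sum_{n in H} x_n, in increasing order of indices (for H nonempty;
   the value on [] is irrelevant). *)
Definition fsum {T : Type} (op : T -> T -> T) (x : nat -> T) (H : list nat) : T :=
  match H with
  | [] => x 0
  | h :: t => fold_left (fun acc n => op acc (x n)) t (x h)
  end.

Definition sum_subsystem {T : Type} (op : T -> T -> T) (y x : nat -> T) : Prop :=
  exists Hs : nat -> list nat,
    (forall n, Pf (Hs n)) /\
    (forall n, maxP (Hs n) < minP (Hs (Datatypes.S n))) /\
    (forall n, y n = fsum op x (Hs n)).

Definition finiteness_of_finite_sums {T : Type} (op : T -> T -> T) (y : nat -> T) : Prop :=
  forall H1 H2, Pf H1 -> Pf H2 -> maxP H1 <> maxP H2 ->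
    fsum op y H1 <> fsum op y H2.

(* Build y_0, y_1, ... as consecutive blocks x_m + ... + x_(m+d), keeping the list V_k of all
   finite sums of y_0, ..., y_(k-1), and choose y_k so that neither y_k nor any a + y_k with
   a in V_k lies in V_k; then a finite sum with maximum k is never in V_k, whereas every
   finite sum with a smaller maximum is.  Such a block exists: the forbidden values form a
   finite set by left weak cancellativity, while the blocks starting at m take infinitely
   many values, since p = p + w (for p = x_m + ... + x_(m+i) and w the next few terms) would
   give p + w^n = p for all n, so the powers of w would form a finite set and some power of
   w would be idempotent. *)
From Stdlib Require Import List Arith Lia Sorting.Sorted Classical ClassicalEpsilon.
Import ListNotations.

Lemma finite_pred_or {T : Type} (P Q : T -> Prop) :
  finite_pred P -> finite_pred Q -> finite_pred (fun z => P z \/ Q z).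
Proof.
  intros [l1 H1] [l2 H2]. exists (l1 ++ l2).
  intros s [Hs|Hs]; apply in_or_app; auto.
Qed.

Lemma finite_pred_exists_In {T A : Type} (P : A -> T -> Prop) (l : list A) :
  (forall a, finite_pred (P a)) -> finite_pred (fun z => exists a, In a l /\ P a z).
Proof.
  intros HP. induction l as [|a l IH].
  - exists []. intros s [a [[] _]].
  - destruct (finite_pred_or _ _ (HP a) IH) as [L HL]. exists L.
    intros s [b [[<-|Hb] Hs]]; apply HL; eauto.
Qed.

Lemma pigeonhole {T : Type} (f : nat -> T) (L : list T) :
  (forall n, In (f n) L) -> exists i j, i < j /\ f i = f j.
Proof.
  intros HL. apply NNPP; intro Hinj.
  set (l := map f (seq 0 (S (length L)))).
  assert (Hnd : NoDup l).
  { apply NoDup_map_NoDup_ForallPairs; [|apply seq_NoDup].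
    intros a b _ _ Hab.
    destruct (Nat.lt_trichotomy a b) as [H|[H|H]]; auto; exfalso; apply Hinj; eauto. }
  assert (Hincl : incl l L).
  { intros z Hz. apply in_map_iff in Hz as [n [<- _]]. auto. }
  pose proof (NoDup_incl_length Hnd Hincl) as Hle.
  unfold l in Hle. rewrite length_map, length_seq in Hle. lia.
Qed.

Lemma Sorted_lt_snoc_inv (l : list nat) (a : nat) :
  Sorted lt (l ++ [a]) -> Sorted lt l /\ (l <> [] -> last l 0 < a).
Proof.
  induction l as [|b l IH]; intros Hs.
  - split; [constructor | congruence].
  - inversion Hs as [|? ? Hs' Hhd]; subst.
    destruct (IH Hs') as [Hsl Hlast]. split.
    + constructor; auto. destruct l as [|c l]; constructor.
      inversion Hhd; auto.
    + intros _. destruct l as [|c l].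
      * inversion Hhd; auto.
      * apply Hlast; congruence.
Qed.

Lemma Pf_snoc_cases (H : list nat) : Pf H ->
  H = [maxP H] \/ exists l, Pf l /\ maxP l < maxP H /\ H = l ++ [maxP H].
Proof.
  intros [Hne Hso].
  destruct (exists_last Hne) as [l [a ->]].
  replace (maxP (l ++ [a])) with a by (unfold maxP; symmetry; apply last_last).
  apply Sorted_lt_snoc_inv in Hso as [Hso Hlast].
  destruct l as [|b l]; [left; reflexivity | right].
  exists (b :: l). repeat split; auto; try discriminate. apply Hlast; discriminate.
Qed.

Lemma Sorted_lt_seq m n : Sorted lt (seq m n).
Proof.
  revert m; induction n as [|n IH]; intros m; simpl; constructor; auto.
  destruct n; simpl; constructor; lia.
Qed.

Lemma Pf_seq m d : Pf (seq m (S d)).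
Proof. split; [discriminate | apply Sorted_lt_seq]. Qed.

Lemma maxP_seq m d : maxP (seq m (S d)) = m + d.
Proof. unfold maxP. rewrite seq_S. apply last_last. Qed.

Section Semigroup.

Context {T : Type} (op : T -> T -> T).
Hypothesis op_assoc : associative op.

Lemma fold_left_op_assoc (x : nat -> T) t a b :
  fold_left (fun acc n => op acc (x n)) t (op a b)
  = op a (fold_left (fun acc n => op acc (x n)) t b).
Proof.
  revert a b; induction t as [|h t IH]; intros a b; simpl; auto.
  rewrite <- op_assoc. apply IH.
Qed.

Lemma fsum_app (x : nat -> T) A B : A <> [] -> B <> [] ->
  fsum op x (A ++ B) = op (fsum op x A) (fsum op x B).
Proof.
  destruct A as [|h t], B as [|h' t']; intros HA HB; try congruence.
  simpl. rewrite fold_left_app. apply fold_left_op_assoc.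
Qed.

Lemma fsum_snoc (x : nat -> T) l a : l <> [] ->
  fsum op x (l ++ [a]) = op (fsum op x l) (x a).
Proof. intros Hl. rewrite fsum_app by (auto; discriminate). reflexivity. Qed.

(* [spow w n] is w^(n+1): the semigroup has no unit. *)
Fixpoint spow (w : T) (n : nat) : T :=
  match n with 0 => w | S n' => op (spow w n') w end.

Lemma spow_add w a b : op (spow w a) (spow w b) = spow w (a + b + 1).
Proof.
  induction b as [|b IH]; simpl.
  - rewrite Nat.add_0_r, Nat.add_1_r. reflexivity.
  - rewrite op_assoc, IH. replace (a + S b + 1) with (S (a + b + 1)) by lia. reflexivity.
Qed.

Lemma spow_shift w a b t : spow w a = spow w b -> spow w (a + t) = spow w (b + t).
Proof.
  intros Hab. induction t as [|t IH].
  - rewrite !Nat.add_0_r; auto.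
  - rewrite !Nat.add_succ_r; simpl; rewrite IH; auto.
Qed.

Lemma spow_periodic w i d : spow w i = spow w (i + d) ->
  forall q c, i <= c -> spow w (c + q * d) = spow w c.
Proof.
  intros Hper q c Hc. induction q as [|q IH]; simpl.
  - rewrite Nat.add_0_r; reflexivity.
  - replace (c + (d + q * d)) with (i + d + (c + q * d - i)) by lia.
    rewrite <- (spow_shift _ _ _ _ Hper). rewrite <- IH. f_equal. lia.
Qed.

Lemma spow_finite_idempotent w (L : list T) :
  (forall n, In (spow w n) L) -> exists e, idempotent op e.
Proof.
  intros HL. destruct (pigeonhole _ _ HL) as [i [j [Hij Heq]]].
  set (d := j - i).
  replace j with (i + d) in Heq by (unfold d; lia).
  (* w^(n+1) with n + 1 = (i + 1) d, a multiple of the period past the preperiod. *)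
  set (n := (i + 1) * d - 1).
  exists (spow w n). unfold idempotent.
  rewrite spow_add.
  replace (n + n + 1) with (n + (i + 1) * d) by (unfold n, d; nia).
  apply (spow_periodic _ _ _ Heq). unfold n, d; nia.
Qed.

Lemma right_absorbed_spow p w : op p w = p -> forall n, op p (spow w n) = p.
Proof.
  intros Hpw n. induction n as [|n IH]; simpl; auto.
  rewrite op_assoc, IH; auto.
Qed.

Hypothesis op_lwc : left_weakly_cancellative op.
Hypothesis op_no_idempotent : forall e : T, ~ idempotent op e.

Definition block (x : nat -> T) (m d : nat) : T := fsum op x (seq m (S d)).

Lemma block_split (x : nat -> T) m i j : i < j ->
  block x m j = op (block x m i) (fsum op x (seq (m + S i) (j - i))).
Proof.
  intros Hij. unfold block.
  replace (S j) with (S i + (j - i)) by lia.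
  rewrite seq_app, fsum_app; auto; [discriminate|].
  destruct (j - i) eqn:E; [lia | discriminate].
Qed.

Lemma block_avoids (x : nat -> T) (L : list T) m : exists d, ~ In (block x m d) L.
Proof.
  apply NNPP; intro Hn.
  assert (HL : forall d, In (block x m d) L).
  { intros d. apply NNPP; intro; apply Hn; eauto. }
  destruct (pigeonhole _ _ HL) as [i [j [Hij Heq]]].
  rewrite (block_split x m i j Hij) in Heq.
  set (p := block x m i) in Heq.
  set (w := fsum op x (seq (m + S i) (j - i))) in Heq.
  destruct (op_lwc p p) as [L' HL'].
  destruct (spow_finite_idempotent w L') as [e He].
  - intros n. apply HL', right_absorbed_spow. auto.
  - exact (op_no_idempotent e He).
Qed.

Definition fresh_for (V : list T) (z : T) : Prop :=
  ~ In z V /\ forall a, In a V -> ~ In (op a z) V.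

Lemma fresh_block_exists (x : nat -> T) (V : list T) m :
  exists d, fresh_for V (block x m d).
Proof.
  assert (Hfin : finite_pred (fun z => In z V \/ exists a, In a V /\ In (op a z) V)).
  { apply finite_pred_or; [exists V; auto|].
    apply finite_pred_exists_In. intros a.
    destruct (finite_pred_exists_In (fun b z => op a z = b) V (op_lwc a)) as [L HL].
    exists L. intros z Hz. apply HL. eauto. }
  destruct Hfin as [L HL].
  destruct (block_avoids x L m) as [d Hd].
  exists d. split.
  - intro Hin. apply Hd, HL. auto.
  - intros a Ha Hin. apply Hd, HL. eauto.
Qed.

Section Construction.

Variable x : nat -> T.
Variable choose : list T * nat -> nat.
Hypothesis choose_fresh : forall Vm, fresh_for (fst Vm) (block x (snd Vm) (choose Vm)).

(* The state after k steps: the finite sums of y_0, ..., y_(k-1), and the first index of x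
   not yet used. *)
Fixpoint stage (k : nat) : list T * nat :=
  match k with
  | 0 => ([], 0)
  | S k' =>
      let '(V, m) := stage k' in
      let y := block x m (choose (V, m)) in
      (V ++ y :: map (fun a => op a y) V, m + S (choose (V, m)))
  end.

Definition sums k := fst (stage k).
Definition start k := snd (stage k).
Definition length_y k := choose (stage k).
Definition index_set k := seq (start k) (S (length_y k)).
Definition y k := fsum op x (index_set k).

Lemma sums_S k : sums (S k) = sums k ++ y k :: map (fun a => op a (y k)) (sums k).
Proof. unfold sums, y, index_set, length_y, start; simpl. destruct (stage k); reflexivity. Qed.

Lemma start_S k : start (S k) = start k + S (length_y k).
Proof. unfold start, length_y; simpl. destruct (stage k); reflexivity. Qed.

Lemma y_fresh k : fresh_for (sums k) (y k).
Proof. exact (choose_fresh (stage k)). Qed.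

Lemma fsum_y_In_sums k H : Pf H -> maxP H < k -> In (fsum op y H) (sums k).
Proof.
  revert H; induction k as [|k IH]; intros H HP Hmax; [lia|].
  rewrite sums_S. apply in_or_app.
  destruct (Nat.eq_dec (maxP H) k) as [Ek|Ek]; [|left; apply IH; auto; lia].
  right. destruct (Pf_snoc_cases H HP) as [E|[l [Hl [Hlt E]]]]; rewrite E, Ek.
  - left; reflexivity.
  - right. rewrite fsum_snoc by (destruct Hl; auto).
    apply (in_map (fun a => op a (y k))). apply IH; auto; lia.
Qed.

Lemma fsum_y_notin_sums H : Pf H -> ~ In (fsum op y H) (sums (maxP H)).
Proof.
  intros HP. destruct (y_fresh (maxP H)) as [Hy Hay].
  destruct (Pf_snoc_cases H HP) as [E|[l [Hl [Hlt E]]]]; rewrite E at 1.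
  - exact Hy.
  - rewrite fsum_snoc by (destruct Hl; auto).
    apply Hay, fsum_y_In_sums; auto.
Qed.

Lemma y_sum_subsystem : sum_subsystem op y x.
Proof.
  exists index_set. split; [|split].
  - intros n. apply Pf_seq.
  - intros n. unfold index_set, minP. rewrite maxP_seq, start_S. simpl. lia.
  - reflexivity.
Qed.

Lemma y_finiteness_of_finite_sums : finiteness_of_finite_sums op y.
Proof.
  assert (Hlt : forall H1 H2, Pf H1 -> Pf H2 -> maxP H1 < maxP H2 ->
                fsum op y H1 <> fsum op y H2).
  { intros H1 H2 HP1 HP2 Hlt E.
    apply (fsum_y_notin_sums H2 HP2). rewrite <- E. apply fsum_y_In_sums; auto. }
  intros H1 H2 HP1 HP2 Hne.
  destruct (Nat.lt_gt_cases (maxP H1) (maxP H2)) as [[Hl|Hl] _]; auto.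
  intro E. symmetry in E. exact (Hlt H2 H1 HP2 HP1 Hl E).
Qed.

End Construction.

End Semigroup.

Theorem lemma2p3 (S : Type) (op : S -> S -> S)
  (Hassoc : associative op)
  (Hinf : infinite_type S)
  (Hlwc : left_weakly_cancellative op)
  (Hnoid : forall e : S, ~ idempotent op e)
  (x : nat -> S) :
  exists y : nat -> S, sum_subsystem op y x /\ finiteness_of_finite_sums op y.
Proof.
  destruct (choice (fun (Vm : list S * nat) d => fresh_for op (fst Vm) (block op x (snd Vm) d)))
    as [choose Hchoose].
  { intros [V m]. apply (fresh_block_exists op Hassoc Hlwc Hnoid). }
  exists (y op x choose). split.
  - apply y_sum_subsystem.
  - apply y_finiteness_of_finite_sums; auto.
Qed.
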